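(* Let $(S_N)$ be real random variables, $a,I(a)\in\mathbb R$, $r\in\mathbb N$, and let $P_m$ ($0\le m\le\lfloor r/2\rfloor$) be polynomials. Suppose $(f_k)_{k\ge1}\subset\mathfrak F^1_{r+1}$ and a function $f$ satisfy: (a) there is $C>0$ with $C^1_{r+1}(f_k)\le C$ for all $k$; (b) the $f_k$ are uniformly bounded in $L^\infty(\mathbb R)$; (c) $f_k\to f$ pointwise; (d) for all $m$, $\lim_{k\to\infty}\int P_m(s)f_k(s)\,ds=\int P_m(s)f(s)\,ds$; (e) there exist $N_0$ and a function $\varepsilon(N)$, independent of $k$, with $N^{(r+1)/2}\varepsilon(N)\to0$, such that for all $N>N_0$ and all $k$, $$\Big|\mathbb E\big(f_k(S_N-aN)\big)e^{I(a)N}-\sum_{m=0}^{\lfloor r/2\rfloor}\frac{1}{N^{m+1/2}}\int_{\mathbb R}P_m(s)f_k(s)\,ds\Big|\le C^1_r(f_k)\,\varepsilon(N).$$ Then for $N>N_0$, $$\mathbb E\big(f(S_N-aN)\big)e^{I(a)N}=\sum_{m=0}^{\lfloor r/2\rfloor}\frac{1}{N^{m+1/2}}\int P_m(s)f(s)\,ds+C\cdot o\big(N^{-\frac{r+1}{2}}\big),$$ i.e. the difference is bounded in absolute value by $C\varepsilon(N)$.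
   Context: $C^m_k(f)=\max_{0\le j\le m}\|f^{(j)}\|_{L^1}+\max_{0\le j\le k}\|x^jf\|_{L^1}$ and $\mathfrak F^m_k=\{f\in C^m(\mathbb R):C^m_k(f)<\infty\}$. *)

From HB Require Import structures.
From mathcomp Require Import all_boot all_order all_algebra.
From mathcomp Require Import all_classical all_reals all_analysis.
Set Implicit Arguments. Unset Strict Implicit. Unset Printing Implicit Defensive.
Import Order.TTheory GRing.Theory Num.Theory.
Import numFieldNormedType.Exports.
Local Open Scope classical_set_scope.
Local Open Scope ring_scope.

Section Defs.
Variable R : realType.

Definition L1norm (g : R -> R) : \bar R :=
  (\int[@lebesgue_measure R]_x (`|g x|)%:E)%E.

Definition Cmk (m k : nat) (f : R -> R) : \bar R :=
  (\big[maxe/0%E]_(j < m.+1) L1norm (derive1n j f) +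
   \big[maxe/0%E]_(j < k.+1) L1norm (fun x => (x ^+ j * f x)%R))%E.

Definition Cm (m : nat) (f : R -> R) : Prop :=
  (forall j, (j < m)%N -> forall x, derivable (derive1n j f) x 1) /\
  continuous (derive1n m f).

Definition Fmk (m k : nat) : set (R -> R) :=
  [set f | Cm m f /\ (Cmk m k f < +oo)%E].
End Defs.

From HB Require Import structures.
From mathcomp Require Import all_boot all_order all_algebra.
From mathcomp Require Import all_classical all_reals all_analysis.
From mathcomp Require Import lra measurable_realfun.
Set Implicit Arguments.
Unset Strict Implicit.
Unset Printing Implicit Defensive.

Import Order.TTheory GRing.Theory Num.Theory.
Import numFieldNormedType.Exports.
Local Open Scope classical_set_scope.
Local Open Scope ring_scope.

(* The f_k are continuous and, being a.e. bounded by M, bounded by M everywhere;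
   hence so is their pointwise limit f.  Bounded convergence under the
   probability Pr then gives E f_k(S_N - aN) --> E f(S_N - aN), and by (d) the
   whole left-hand side of (e) converges to that of the conclusion.  Since
   C^1_r(f_k) <= C^1_{r+1}(f_k) <= C, the bound of (e) passes to the limit.
   The argument works at each fixed N. *)

Lemma le_Cmk (R : realType) (m k k' : nat) (f : R -> R) :
  (k <= k')%N -> (Cmk m k f <= Cmk m k' f)%E.
Proof.
move=> kk'; apply: leeD => //.
by apply: (le_bigmax_ord xpredT (fun j => L1norm (fun x => x ^+ j * f x))).
Qed.

Lemma Cm_continuous (R : realType) (m : nat) (f : R -> R) :
  Cm m f -> continuous f.
Proof.
case: m => [[_ //]|m [df _] x].
apply: differentiable_continuous; rewrite -derivable1_diffP.
exact: (df 0%N isT x).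
Qed.

Lemma continuous_ae_norm_le (R : realType) (h : R -> R) (M : R) :
  continuous h -> {ae @lebesgue_measure R, forall x, `|h x| <= M} ->
  forall x, `|h x| <= M.
Proof.
move=> ch [B [mB B0 sB]] x; rewrite leNgt; apply/negP => Mx.
have : (fun y => `|h y|) @ x --> `|h x| by apply: cvg_norm; exact: ch.
move=> /cvgr_gt/(_ _ Mx)/nbhs_ballP[e /= e0 He].
have itv_B : `](x - e), (x + e)[ `<=` B.
  move=> y /=; rewrite in_itv /= => /andP[y_gt y_lt].
  apply: sB => /= hyM; move: hyM; apply/negP; rewrite -ltNge; apply: He.
  by rewrite /ball /= ltr_norml; apply/andP; split; lra.
have : (@lebesgue_measure R `](x - e)%R, (x + e)%R[ <= lebesgue_measure B)%E.
  by apply: le_measure => //; rewrite inE //; exact: measurable_itv.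
rewrite B0 lebesgue_measure_itv /= ifT ?lte_fin; last lra.
by rewrite -EFinB lee_fin; lra.
Qed.

Lemma fine_le_EFin (R : realType) (x : \bar R) (c : R) :
  0 <= c -> (x <= c%:E)%E -> fine x <= c.
Proof. by case: x => //= y _; rewrite lee_fin. Qed.

Section bounded_convergence.
Context d (T : measurableType d) (R : realType).
Variables (mu : {finite_measure set T -> \bar R}) (D : set T).
Hypothesis mD : measurable D.

Lemma bounded_convergence_Rintegral (g_ : (T -> R)^nat) (g : T -> R) (M : R) :
  (forall n, measurable_fun D (g_ n)) ->
  (forall x, D x -> g_ ^~ x @ \oo --> g x) ->
  (forall n x, D x -> `|g_ n x| <= M) ->
  Rintegral mu D (g_ n) @[n --> \oo] --> Rintegral mu D g.
Proof.
move=> mg_ g_g g_M.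
have mEg_ n : measurable_fun D (fun x => (g_ n x)%:E : \bar R).
  by apply/measurable_EFinP.
have mEg : measurable_fun D (fun x => (g x)%:E : \bar R).
  by apply/measurable_EFinP; exact: measurable_fun_cvg g_g.
have Eg_g : {ae mu, forall x, D x -> (g_ n x)%:E @[n --> \oo] --> (g x)%:E}.
  by apply: aeW => x Dx; apply: cvg_EFin; [exact: nearW | exact: g_g].
have Eg_M : {ae mu, forall x n, D x -> (`|(g_ n x)%:E| <= (cst M x)%:E)%E}.
  by apply: aeW => x n Dx; rewrite lee_fin; exact: g_M.
have [ig _ cvg_int] := dominated_convergence mD mEg_ mEg Eg_g
  (finite_measure_integrable_cst mu M mD) Eg_M.
apply: (fine_cvg (f := fun n => \int[mu]_(x in D) (g_ n x)%:E)%E).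
rewrite /Rintegral fineK; first exact: cvg_int.
exact: integrable_fin_num ig.
Qed.

End bounded_convergence.

Theorem lemma3p3 (R : realType) (d : measure_display) (Omega : measurableType d)
  (Pr : probability Omega R) (S : nat -> Omega -> R)
  (a Ia : R) (r : nat) (P : nat -> {poly R})
  (fk : nat -> R -> R) (f : R -> R) (C : R) (N0 : nat) (eps : nat -> R) :
  (forall N, measurable_fun setT (S N)) ->
  (forall k, fk k \in Fmk 1 r.+1) ->
  (* (a) *)
  0 < C -> (forall k, (Cmk 1 r.+1 (fk k) <= C%:E)%E) ->
  (* (b) *)
  (exists M : R, forall k,
      {ae @lebesgue_measure R, forall x, `|fk k x| <= M}) ->
  (* (c) *)
  (forall x, fk k x @[k --> \oo] --> f x) ->
  (* integrals appearing in (d), (e) and the conclusion are finite *)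
  (forall m, (m <= r./2)%N -> forall k,
      (@lebesgue_measure R).-integrable setT
        (fun s => ((P m).[s] * fk k s)%:E)) ->
  (forall m, (m <= r./2)%N ->
      (@lebesgue_measure R).-integrable setT
        (fun s => ((P m).[s] * f s)%:E)) ->
  (* (d) *)
  (forall m, (m <= r./2)%N ->
      Rintegral (@lebesgue_measure R) setT (fun s => (P m).[s] * fk k s)
        @[k --> \oo] -->
      Rintegral (@lebesgue_measure R) setT (fun s => (P m).[s] * f s)) ->
  (* (e) *)
  (forall N, (N0 < N)%N -> 0 <= eps N) ->
  ((N%:R `^ ((r.+1)%:R / 2)) * eps N @[N --> \oo] --> (0 : R)) ->
  (forall N, (N0 < N)%N -> forall k,
      `| Rintegral Pr setT (fun w => fk k (S N w - a * N%:R)) * expR (Ia * N%:R)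
         - \sum_(m < r./2.+1)
             (N%:R `^ (m%:R + 2^-1))^-1 *
             Rintegral (@lebesgue_measure R) setT (fun s => (P m).[s] * fk k s) |
      <= fine (Cmk 1 r (fk k)) * eps N) ->
  (* conclusion *)
  forall N, (N0 < N)%N ->
      `| Rintegral Pr setT (fun w => f (S N w - a * N%:R)) * expR (Ia * N%:R)
         - \sum_(m < r./2.+1)
             (N%:R `^ (m%:R + 2^-1))^-1 *
             Rintegral (@lebesgue_measure R) setT (fun s => (P m).[s] * f s) |
      <= C * eps N.
Proof.
move=> mS fkF C0 fkC [M fkM] fk_f _ _ cvg_Pfk eps0 _ expansion_fk N N0N.
have cont_fk k : continuous (fk k).
  by move: (fkF k); rewrite inE => -[/Cm_continuous].
have fk_le_M k x : `|fk k x| <= M := continuous_ae_norm_le (cont_fk k) (fkM k) x.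
have Cfk_le_C k : fine (Cmk 1 r (fk k)) <= C.
  by apply: fine_le_EFin (ltW C0) (le_trans (le_Cmk _ _ (leqnSn r)) (fkC k)).
have cvg_E : Rintegral Pr setT (fun w => fk k (S N w - a * N%:R))
    @[k --> \oo] --> Rintegral Pr setT (fun w => f (S N w - a * N%:R)).
  apply: (bounded_convergence_Rintegral _ (M := M)) => // k.
  apply: (measurableT_comp (continuous_measurable_fun (cont_fk k))).
  exact: measurable_funB.
apply: (cvgr_to_le (F := \oo) (f := fun k =>
   `| Rintegral Pr setT (fun w => fk k (S N w - a * N%:R)) * expR (Ia * N%:R)
      - \sum_(m < r./2.+1) (N%:R `^ (m%:R + 2^-1))^-1 *
          Rintegral (@lebesgue_measure R) setT (fun s => (P m).[s] * fk k s) |)).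
  apply: cvg_norm; apply: cvgB; first exact: cvgMr_tmp.
  apply: cvg_big => // [|m _]; first exact: add_continuous.
  by apply: cvgMl_tmp; apply: cvg_Pfk; rewrite -ltnS.
apply: nearW => k; apply: le_trans (expansion_fk N N0N k) _.
by rewrite ler_wpM2r ?eps0.
Qed.
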